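(* The $\mathcal{C}$-module $\mathfrak{n}$ is an ideal of $\widehat{\mathfrak{H}^{0}}$ with respect to both the harmonic product $\ast_\hbar$ and the shuffle product $\mathrm{sh}_\hbar$; that is, $\mathfrak n\ast_\hbar\widehat{\mathfrak H^0}\subset\mathfrak n$ and $\mathfrak n\,\mathrm{sh}_\hbar\,\widehat{\mathfrak H^0}\subset\mathfrak n$.
   Context: Let $\mathcal{C}=\mathbb{Q}[\hbar]$ ($\hbar$ formal), $\mathfrak{H}=\mathcal{C}\langle a,b\rangle$ the non-commutative polynomial ring. For $k\ge1$, $g_k=ba^k$. $A=\{\hbar b\}\cup\{ba^k\mid k\ge1\}$, $\mathcal{C}\langle A\rangle$ the $\mathcal{C}$-subalgebra generated by $1$ and $A$, $\mathfrak z$ the $\mathcal C$-span of $A$, $\widehat{\mathfrak H^0}=\mathcal C+\sum_{k\ge1}\mathcal C\langle A\rangle g_k$. Let $\mathfrak n_0$ be the $\mathcal C$-span of $(\hbar b)^{\alpha_1}g_{\beta_1+1}\cdots(\hbar b)^{\alpha_r}g_{\beta_r+1}$ with $r\ge1$, $\alpha_i,\beta_i\ge0$ and $\alpha_s\ge1,\beta_t\ge1$ for some $1\le s\le t\le r$; $\mathfrak n=\mathfrak n_0+\hbar\widehat{\mathfrak H^0}$. Harmonic product: $\circ_\hbar$ symmetric $\mathcal C$-bilinear on $\mathfrak z$ with $(\hbar b)\circ_\hbar(\hbar b)=\hbar\cdot\hbar b$, $(\hbar b)\circ_\hbar g_k=\hbar g_k$, $g_k\circ_\hbar g_l=g_{k+l}$;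 $\ast_\hbar$ on $\mathcal{C}\langle A\rangle$ is $\mathcal C$-bilinear with $w\ast_\hbar1=1\ast_\hbar w=w$, $(wu)\ast_\hbar(w'v)=(w\ast_\hbar w'v)u+(wu\ast_\hbar w')v+(w\ast_\hbar w')(u\circ_\hbar v)$ ($u,v\in A$). Shuffle product $\mathrm{sh}_\hbar$ on $\mathfrak H$: $\mathcal C$-bilinear with $w\,\mathrm{sh}_\hbar\,1=1\,\mathrm{sh}_\hbar\,w=w$, $wa\,\mathrm{sh}_\hbar\,w'a=(wa\,\mathrm{sh}_\hbar\,w'+w\,\mathrm{sh}_\hbar\,w'a+\hbar(w\,\mathrm{sh}_\hbar\,w'))a$, $wb\,\mathrm{sh}_\hbar\,w'=w\,\mathrm{sh}_\hbar\,w'b=(w\,\mathrm{sh}_\hbar\,w')b$. *)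

From HB Require Import structures.
From mathcomp Require Import all_boot all_order all_algebra.
From mathcomp Require Import finmap.
From mathcomp.multinomials Require Import monalg.
Set Implicit Arguments. Unset Strict Implicit. Unset Printing Implicit Defensive.
Import GRing.Theory.
Local Open Scope ring_scope.

Definition Cr := {poly rat}.
Definition hbar : Cr := 'X.

(* Letters of H: a = true, b = false.  Words of H are {fmonom bool}. *)
Definition word := {fmonom bool}.
Definition H := {malg Cr[word]}.
Definition wordH (s : seq bool) : H := << FMonom s >>.
Definition aH : H := wordH [:: true].
Definition bH : H := wordH [:: false].

(* Elements of A are encoded by nat: 0 is hbar*b, k >= 1 is g_k = b a^k. *)
Definition gH (k : nat) : H := bH * aH ^+ k.
Definition Aletter (i : nat) : H := if i == 0%N then hbar *: bH else gH i.

(* A-words and the free C-module on them (a model of C<A>; the map iotaA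
   below is the (injective) C-linear map into H). *)
Definition Aword := {fmonom nat}.
Definition CA := {malg Cr[Aword]}.
Definition wordA (s : seq nat) : CA := << FMonom s >>.

Definition iotaW (u : Aword) : H := \prod_(i <- (u : seq nat)) Aletter i.
Definition iotaA (X : CA) : H := \sum_(u <- msupp X) X@_u *: iotaW u.

Definition Aspan (P : seq nat -> Prop) (x : H) : Prop :=
  exists X : CA, (forall u, u \in msupp X -> P (u : seq nat)) /\ x = iotaA X.

(* \hat{H^0} = C + sum_k C<A> g_k : span of A-words that are empty or end with some g_k. *)
Definition H0word (u : seq nat) : Prop := u = [::] \/ (0 < last 0%N u)%N.
Definition in_H0 (x : H) : Prop := Aspan H0word x.

(* n_0 : span of (hb)^{a1} g_{b1+1} ... (hb)^{ar} g_{br+1}, r >= 1, with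
   a_s >= 1, b_t >= 1 for some s <= t; equivalently the A-word ends with a
   g-letter and some hbar*b (letter 0) occurs before some g_k with k >= 2. *)
Definition n0word (u : seq nat) : Prop :=
  (0 < last 0%N u)%N /\
  exists i j : nat, (i < j)%N /\ (j < size u)%N /\
    nth 0%N u i = 0%N /\ (2 <= nth 0%N u j)%N.
Definition in_n0 (x : H) : Prop := Aspan n0word x.
Definition in_n (x : H) : Prop :=
  exists y z : H, in_n0 y /\ in_H0 z /\ x = y + hbar *: z.

Definition circA (x y : nat) : CA :=
  if (x == 0%N) || (y == 0%N) then hbar *: wordA [:: x + y]%N
  else wordA [:: x + y]%N.

(* harmonic product of A-words, given REVERSED (last letter first). *)
Fixpoint harr (u : seq nat) : seq nat -> CA :=
  fix harr_in (v : seq nat) : CA :=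
    match u, v with
    | [::], _ => wordA (rev v)
    | _, [::] => wordA (rev u)
    | x :: u', y :: v' =>
        harr u' v * wordA [:: x] + harr_in v' * wordA [:: y]
        + harr u' v' * circA x y
    end.
Definition harW (u v : Aword) : CA := harr (rev u) (rev v).
Definition harm (X Y : CA) : CA :=
  \sum_(u <- msupp X) \sum_(v <- msupp Y) (X@_u * Y@_v) *: harW u v.

(* Shuffle product of words of H, given REVERSED. *)
Fixpoint shr (u : seq bool) : seq bool -> H :=
  fix shr_in (v : seq bool) : H :=
    match u, v with
    | [::], _ => wordH (rev v)
    | _, [::] => wordH (rev u)
    | false :: u', _ => shr u' v * bH
    | true :: u', false :: v' => shr_in v' * bH
    | true :: u', true :: v' => (shr u' v + shr_in v' + hbar *: shr u' v') * aH
    end.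
Definition shW (u v : word) : H := shr (rev u) (rev v).
Definition shuffle (x y : H) : H :=
  \sum_(u <- msupp x) \sum_(v <- msupp y) (x@_u * y@_v) *: shW u v.

From HB Require Import structures.
From mathcomp Require Import all_boot all_order all_algebra.
From mathcomp Require Import finmap zify.
From mathcomp.multinomials Require Import monalg.
Set Implicit Arguments. Unset Strict Implicit. Unset Printing Implicit Defensive.
Import GRing.Theory.
Local Open Scope ring_scope.

(* A term of the harmonic
   product of two A-words is a merge of them in which merged letters add their
   indices, and a merge involving hbar b costs a factor hbar; so a term not
   divisible by hbar keeps the letter hbar b of the first factor and, after
   it, a letter g_k with k >= 2.  For the shuffle product we spell A-words in
   a and b (g_k as b a^k, hbar b as b with the hbar kept aside) and run a
   finite automaton on words of H.  An invariant relating the states reached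
   on the two factors and on an output word with coefficient hbar^m shows
   that the output spells an A-word of H^0 whose letters hbar b are paid for
   by those of the factors and by the merges aa -> a, each of which carries
   an hbar; when nothing is left over, the pattern hbar b ... g_k (k >= 2) of
   the first factor survives. *)

Record lmod_closed (R : ringType) (V : lmodType R) (P : V -> Prop) : Prop :=
  LmodClosed {
    closed0 : P 0;
    closedD : forall x y, P x -> P y -> P (x + y);
    closedZ : forall c x, P x -> P (c *: x) }.

Lemma closed_scale (R : comRingType) (V : lmodType R) (P : V -> Prop) (c : R) :
  lmod_closed P -> lmod_closed (fun x => P (c *: x)).
Proof.
move=> [P0 PD PZ]; split=> [|x y hx hy|d x hx]; rewrite ?scaler0 ?scalerDr //; first exact: PD.
by rewrite scalerA mulrC -scalerA; apply: PZ.
Qed.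

(** * Linear extension from a basis *)

Section LinearExtension.
Variables (K : choiceType) (R : ringType) (V : lmodType R).
Implicit Types (F : K -> V) (X : {malg R[K]}).

Definition lin_ext F X : V := \sum_(k <- msupp X) X@_k *: F k.

Lemma lin_ext_fset F X (d : {fset K}) :
  (msupp X `<=` d)%fset -> lin_ext F X = \sum_(k <- d) X@_k *: F k.
Proof.
move=> le; rewrite /lin_ext (big_fset_incl _ le) => //= k _ /mcoeff_outdom ->.
by rewrite scale0r.
Qed.

Lemma eq_lin_ext F G : F =1 G -> lin_ext F =1 lin_ext G.
Proof. by move=> FG X; apply: eq_bigr => k _; rewrite FG. Qed.

Lemma lin_ext_is_linear F : linear (lin_ext F).
Proof.
move=> c X Y; set d := (msupp X `|` msupp Y `|` msupp (c *: X + Y))%fset.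
have leX : (msupp X `<=` d)%fset by rewrite /d -fsetUA fsubsetUl.
have leY : (msupp Y `<=` d)%fset by rewrite /d fsetUAC fsubsetUr.
have leXY : (msupp (c *: X + Y) `<=` d)%fset by rewrite /d fsubsetUr.
rewrite !(lin_ext_fset _ leX, lin_ext_fset _ leY, lin_ext_fset _ leXY).
rewrite scaler_sumr -big_split; apply: eq_bigr => k _.
by rewrite mcoeffD mcoeffZ scalerDl scalerA.
Qed.

HB.instance Definition _ F :=
  GRing.isLinear.Build R {malg R[K]} V *:%R (lin_ext F) (lin_ext_is_linear F).

Lemma lin_extU F c k : lin_ext F << c *g k >> = c *: F k.
Proof. by rewrite (lin_ext_fset _ msuppU_le) big_seq_fset1 mcoeffUU. Qed.

Lemma lin_ext_closed (P : V -> Prop) F X :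
  lmod_closed P -> (forall k, k \in msupp X -> P (F k)) -> P (lin_ext F X).
Proof.
move=> [P0 PD PZ] PF; rewrite /lin_ext big_seq.
by apply: (big_ind P) => // k /PF; apply: PZ.
Qed.

End LinearExtension.

Lemma scale_lin_ext (K : choiceType) (R : comRingType) (V : lmodType R) c
    (F : K -> V) (X : {malg R[K]}) :
  c *: lin_ext F X = lin_ext (fun k => c *: F k) X.
Proof. by rewrite scaler_sumr; apply: eq_bigr => k _; rewrite !scalerA mulrC. Qed.

Lemma lin_ext_comp (K : choiceType) (R : ringType) (V W : lmodType R)
    (f : {linear V -> W}) (F : K -> V) (X : {malg R[K]}) :
  f (lin_ext F X) = lin_ext (f \o F) X.
Proof. by rewrite linear_sum; apply: eq_bigr => k _; rewrite linearZ. Qed.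

Lemma malgZU (K : choiceType) (R : ringType) (c d : R) (k : K) :
  c *: << d *g k >> = << c * d *g k >> :> {malg R[K]}.
Proof. by apply/malgP => m; rewrite mcoeffZ !mcoeffU mulrnAr. Qed.

Section MonoidAlgebra.
Variables (K : monomType) (R : comRingType).
Implicit Types (x y : {malg R[K]}).

Lemma malgC_central (c : R) x : x * c%:MP = c%:MP * x.
Proof.
apply/malgP => k; rewrite mcoeffCM (mcoeffMlw _ (fsubset_refl _) (msuppC_le c)).
rewrite (eq_bigr (fun k1 => x@_k1 * c *+ (k1 == k))); last first.
  by move=> k1 _; rewrite big_seq_fset1 mcoeffC eqxx mulr1n mulm1.
rewrite -(mcoeffZ c x k) [in RHS](monalgE (c *: x)) raddf_sum /=.
rewrite (big_fset_incl _ (msuppZ_le c x)) /=; last first.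
  by move=> k1 _ /mcoeff_outdom ->; rewrite mcoeffU mul0rn.
by apply: eq_bigr => k1 _; rewrite mcoeffU mcoeffZ mulrC.
Qed.

Lemma malg_scalerAr (c : R) x y : x * (c *: y) = c *: (x * y).
Proof. by rewrite -!mul_malgC mulrA malgC_central mulrA. Qed.

End MonoidAlgebra.

Lemma fmalgUM (I : choiceType) (R : ringType) (c d : R) (s t : seq I) :
  << c *g FMonom s >> * << d *g FMonom t >> = << c * d *g FMonom (s ++ t) >>
  :> {malg R[{fmonom I}]}.
Proof. by rewrite malgM_def fgmulUU; congr << _ *g _ >>; apply: val_inj; rewrite /= fmM. Qed.

Lemma fmalg1 (I : choiceType) (R : ringType) : 1 = << FMonom [::] >> :> {malg R[{fmonom I}]}.
Proof. by rewrite /GRing.one /= /fgone; congr << _ >>; apply: val_inj; rewrite /= fm1. Qed.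

(** * Spelling A-words in a and b *)

Fixpoint abword (w : seq nat) : seq bool :=
  if w is k :: w' then false :: nseq k true ++ abword w' else [::].

Lemma abword_rcons w k : abword (rcons w k) = abword w ++ false :: nseq k true.
Proof. by elim: w => [|j w IH] /=; rewrite ?cats0 ?IH -?catA. Qed.

Lemma abword_inj : injective abword.
Proof.
have head_b w : abword w = [::] \/ exists t, abword w = false :: t.
  by case: w => [|k w]; [left|right; eexists].
have nseq_cat_inj k k' s s' : s = [::] \/ (exists t, s = false :: t) ->
    s' = [::] \/ (exists t, s' = false :: t) ->
    nseq k true ++ s = nseq k' true ++ s' -> k = k' /\ s = s'.
  move=> hs hs'; elim: k k' => [|k IH] [|k'] //= e.
  - by case: hs e => [->|[t ->]].
  - by case: hs' e => [->|[t ->]].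
  - by case: e => /IH [-> ->].
elim=> [|k w IH] [|k' w'] //= [] /nseq_cat_inj.
by case/(_ (head_b w) (head_b w')) => -> /IH ->.
Qed.

Lemma aH_exp k : aH ^+ k = << FMonom (nseq k true) >>.
Proof.
elim: k => [|k IH]; first by rewrite expr0 fmalg1.
by rewrite exprS IH /aH /wordH fmalgUM mulr1.
Qed.

Lemma AletterE k :
  Aletter k = << (if k == 0%N then hbar else 1) *g FMonom (false :: nseq k true) >>.
Proof.
rewrite /Aletter; have [->|_] := eqVneq k 0%N.
  by rewrite /bH /wordH malgZU mulr1.
by rewrite /gH aH_exp /bH /wordH fmalgUM mulr1.
Qed.

Lemma iotaW_abword w :
  iotaW (FMonom w) = << hbar ^+ count_mem 0%N w *g FMonom (abword w) >>.
Proof.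
elim: w => [|k w IH]; first by rewrite /iotaW big_nil fmalg1 expr0.
rewrite /iotaW /= big_cons -/(iotaW (FMonom w)) IH AletterE fmalgUM.
by have [->|_] := eqVneq k 0%N; rewrite ?exprS ?mul1r.
Qed.

Lemma iotaAE X : iotaA X = lin_ext iotaW X.
Proof. by []. Qed.

Lemma iotaA_word w : iotaA (wordA w) = iotaW (FMonom w).
Proof. by rewrite iotaAE lin_extU scale1r. Qed.

Lemma mcoeff_iotaA X w :
  (iotaA X)@_(FMonom (abword w)) = X@_(FMonom w) * hbar ^+ count_mem 0%N w.
Proof.
have le : (msupp X `<=` msupp X `|` [fset FMonom w])%fset by rewrite fsubsetUl.
rewrite iotaAE (lin_ext_fset _ le) raddf_sum (big_fsetD1 (FMonom w)) /=; last first.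
  by rewrite in_fsetU in_fset1 eqxx orbT.
rewrite big1_fset ?addr0 => [|u]; first by rewrite mcoeffZ iotaW_abword mcoeffU eqxx.
rewrite in_fsetD1 -(fmK u) iotaW_abword mcoeffZ mcoeffU => /andP[uw _] _.
case: (FMonom (abword u) =P FMonom (abword w)) => [[/abword_inj uwE]|_].
  by rewrite uwE eqxx in uw.
by rewrite mulr0n mulr0.
Qed.

Lemma iotaA_inj : injective iotaA.
Proof.
move=> X Y e; apply/malgP => u; rewrite -(fmK u).
have := congr1 (mcoeff (FMonom (abword u))) e; rewrite !mcoeff_iotaA.
by apply: mulIf; rewrite expf_neq0 // polyX_eq0.
Qed.

Definition supported (P : seq nat -> Prop) (X : CA) : Prop :=
  forall u : Aword, u \in msupp X -> P u.

Definition hspan (P Q : seq nat -> Prop) (X : CA) : Prop :=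
  exists Y Z, [/\ supported P Y, supported Q Z & X = Y + hbar *: Z].

Lemma supported_closed (P : seq nat -> Prop) : lmod_closed (supported P).
Proof.
split=> [u|X Y hX hY u|c X hX u]; first by rewrite msupp0.
  by move/(fsubsetP (msuppD_le X Y)); rewrite in_fsetU => /orP[/hX|/hY].
by move/(fsubsetP (msuppZ_le c X)); apply: hX.
Qed.

Lemma supported_any {X : CA} : supported (fun _ => True) X.
Proof. by []. Qed.

Section Spans.
Variables (P Q : seq nat -> Prop).

Lemma hspan_closed : lmod_closed (hspan P Q).
Proof.
have [_ SD SZ] := supported_closed P; have [_ TD TZ] := supported_closed Q.
split.
- by exists 0, 0; rewrite scaler0 addr0; split=> // u; rewrite msupp0.
- move=> _ _ [Y1 [Z1 [hY1 hZ1 ->]]] [Y2 [Z2 [hY2 hZ2 ->]]].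
  by exists (Y1 + Y2), (Z1 + Z2); rewrite scalerDr addrACA; split; [apply: SD|apply: TD|].
- move=> c _ [Y [Z [hY hZ ->]]].
  by exists (c *: Y), (c *: Z); rewrite scalerDr !scalerA mulrC; split; [apply: SZ|apply: TZ|].
Qed.

Lemma hspanD X Y : hspan P Q X -> hspan P Q Y -> hspan P Q (X + Y).
Proof. exact: (closedD hspan_closed). Qed.

Lemma supported_word s : P s -> supported P (wordA s).
Proof. by move=> Ps u; rewrite msuppU1 in_fset1 => /eqP ->. Qed.

Lemma hspan_supported X : supported P X -> hspan P Q X.
Proof. by exists X, 0; rewrite scaler0 addr0; split=> // u; rewrite msupp0. Qed.

Lemma hspan_hbar X : supported Q X -> hspan P Q (hbar *: X).
Proof. by exists 0, X; rewrite add0r; split=> // u; rewrite msupp0. Qed.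

End Spans.

Lemma supported_mul_letter (P P' : seq nat -> Prop) z X :
  supported P X -> (forall w, P w -> P' (rcons w z)) -> supported P' (X * wordA [:: z]).
Proof.
move=> hX hP w /msuppM_le [u [v [uX]]].
by rewrite msuppU1 in_fset1 => /eqP -> ->; rewrite fmM /= cats1; apply/hP/hX.
Qed.

Lemma hspan_mul_letter (P Q P' Q' : seq nat -> Prop) z X :
  hspan P Q X -> (forall w, P w -> P' (rcons w z)) -> (forall w, Q w -> Q' (rcons w z)) ->
  hspan P' Q' (X * wordA [:: z]).
Proof.
move=> [Y [Z [hY hZ ->]]] hP hQ; exists (Y * wordA [:: z]), (Z * wordA [:: z]).
by rewrite mulrDl scalerAl; split; [apply: supported_mul_letter hP|apply: supported_mul_letter hQ|].
Qed.

Lemma in_H0_iotaA Y : in_H0 (iotaA Y) -> supported H0word Y.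
Proof. by case=> Y' [hY' /iotaA_inj ->]. Qed.

Lemma in_n_iotaA X : in_n (iotaA X) <-> hspan n0word H0word X.
Proof.
split=> [[_ [_ [[Y [hY ->]] [[Z [hZ ->]] e]]]]|[Y [Z [hY hZ ->]]]].
  by exists Y, Z; split=> //; apply: iotaA_inj; rewrite e !iotaAE linearD linearZ.
exists (iotaA Y), (iotaA Z); split; [by exists Y|split; first by exists Z].
by rewrite !iotaAE linearD linearZ.
Qed.

Lemma Aspan_closed (P : seq nat -> Prop) : lmod_closed (Aspan P).
Proof.
have [S0 SD SZ] := supported_closed P.
split=> [|_ _ [X [hX ->]] [Y [hY ->]]|c _ [X [hX ->]]].
- by exists 0; rewrite iotaAE linear0.
- by exists (X + Y); rewrite !iotaAE linearD; split; first exact: SD.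
- by exists (c *: X); rewrite !iotaAE linearZ; split; first exact: SZ.
Qed.

Lemma in_n_closed : lmod_closed in_n.
Proof.
have [S0 SD SZ] := Aspan_closed n0word; have [T0 TD TZ] := Aspan_closed H0word.
split=> [|_ _ [y1 [z1 [h1 [h2 ->]]]] [y2 [z2 [h3 [h4 ->]]]]|c _ [y [z [h1 [h2 ->]]]]].
- by exists 0, 0; rewrite scaler0 addr0.
- exists (y1 + y2), (z1 + z2); rewrite scalerDr addrACA.
  by split; [exact: SD|split; first exact: TD].
- exists (c *: y), (c *: z); rewrite scalerDr !scalerA mulrC.
  by split; [exact: SZ|split; first exact: TZ].
Qed.

Lemma in_n_n0 x : Aspan n0word x -> in_n x.
Proof.
by exists x, 0; rewrite scaler0 addr0; split=> //; split; first exact: closed0 (Aspan_closed _).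
Qed.

Lemma in_n_hbar x : Aspan H0word x -> in_n (hbar *: x).
Proof. by exists 0, x; rewrite add0r; split=> //; exact: closed0 (Aspan_closed _). Qed.

(** * The harmonic product *)

(* n0word u is convertible to 0 < last 0 u /\ zero_then_big u. *)
Definition zero_then_big (u : seq nat) : Prop :=
  exists i j : nat, (i < j)%N /\ (j < size u)%N /\
    nth 0%N u i = 0%N /\ (2 <= nth 0%N u j)%N.

Lemma zero_then_big_nil : ~ zero_then_big [::].
Proof. by move=> [i [j [_ []]]]. Qed.

Lemma zero_then_big_rcons w k :
  zero_then_big (rcons w k) <-> zero_then_big w \/ (0%N \in w /\ (2 <= k)%N).
Proof.
split=> [[i [j [ij [js [wi wj]]]]]|[[i [j [ij [js [wi wj]]]]]|[w0 k2]]].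
- move: js; rewrite size_rcons ltnS leq_eqVlt => /orP[/eqP jE|js].
    have iw : (i < size w)%N by rewrite -jE.
    right; move: wi wj; rewrite !nth_rcons jE ltnn eqxx iw => wi k2.
    by split=> //; rewrite -wi mem_nth.
  left; exists i, j; move: wi wj; rewrite !nth_rcons js (ltn_trans ij js) => wi wj.
  by repeat split.
- exists i, j; rewrite size_rcons ltnS (ltnW js) !nth_rcons js (ltn_trans ij js).
  by repeat split.
- exists (index 0%N w), (size w).
  by rewrite size_rcons !nth_rcons index_mem w0 ltnn eqxx nth_index; repeat split.
Qed.

Lemma H0word_rcons w k : H0word (rcons w k) <-> (0 < k)%N.
Proof.
rewrite /H0word last_rcons; split=> [[|//]|]; last by right.
by move/(congr1 size); rewrite size_rcons.
Qed.

Definition harS (p q : seq nat) : CA := harr (rev p) (rev q).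

Lemma harS_nill q : harS [::] q = wordA q.
Proof. by rewrite /harS; case: (rev q) (revK q) => [|y v] <-. Qed.

Lemma harS_nilr p : harS p [::] = wordA p.
Proof. by rewrite /harS; case: (rev p) (revK p) => [|x u] <-. Qed.

Lemma harS_rcons p x q y :
  harS (rcons p x) (rcons q y) = harS p (rcons q y) * wordA [:: x]
    + harS (rcons p x) q * wordA [:: y] + harS p q * circA x y.
Proof. by rewrite /harS !rev_rcons. Qed.

Lemma hspan_mul_circ (P Q : seq nat -> Prop) x y X :
  (forall w, Q (rcons w (x + y)%N)) ->
  ((x != 0%N) && (y != 0%N) -> hspan P Q (X * wordA [:: (x + y)%N])) ->
  hspan P Q (X * circA x y).
Proof.
move=> hQ hxy; rewrite /circA; case: ifP => [_|/negbT]; last by rewrite negb_or => /hxy.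
rewrite malg_scalerAr; apply: hspan_hbar.
exact: (supported_mul_letter supported_any (fun w _ => hQ w)).
Qed.

Lemma harS_zero_mem p q :
  0%N \in p -> hspan (fun w => 0%N \in w) (fun _ => True) (harS p q).
Proof.
have keep0 z w : 0%N \in w -> 0%N \in rcons w z by rewrite mem_rcons in_cons orbC => ->.
elim/last_ind: p q => [//|p x IHp] q; rewrite mem_rcons in_cons => p0.
elim/last_ind: q => [|q y IHq].
  by rewrite harS_nilr; apply: hspan_supported; apply: supported_word; rewrite /= mem_rcons in_cons.
rewrite harS_rcons; apply: hspanD; first apply: hspanD.
- case/orP: p0 => [/eqP <-|p0]; last exact: hspan_mul_letter (IHp _ p0) (keep0 x) _.
  apply: hspan_supported; apply: (supported_mul_letter supported_any) => w _.
  by rewrite mem_rcons mem_head.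
- exact: hspan_mul_letter IHq (keep0 y) _.
- apply: hspan_mul_circ => // /andP[xn0 _].
  by move: p0; rewrite eq_sym (negbTE xn0) => p0; exact: hspan_mul_letter (IHp _ p0) (keep0 _) _.
Qed.

Lemma hspan_harS_rcons (P Q : seq nat -> Prop) p x q y :
  (forall w z, [\/ z = x, z = y | z = (x + y)%N] ->
     zero_then_big (rcons w z) -> P (rcons w z)) ->
  (forall w z, [\/ z = x, z = y | z = (x + y)%N] -> Q (rcons w z)) ->
  zero_then_big (rcons p x) ->
  (zero_then_big p -> forall q', hspan zero_then_big (fun _ => True) (harS p q')) ->
  hspan zero_then_big (fun _ => True) (harS (rcons p x) q) ->
  hspan P Q (harS (rcons p x) (rcons q y)).
Proof.
move=> hP hQ bad_px IHp IHq.
have liftP z : [\/ z = x, z = y | z = (x + y)%N] ->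
    forall w, zero_then_big w -> P (rcons w z).
  by move=> hz w bad_w; apply/hP/zero_then_big_rcons; [|left].
have lift0 z : [\/ z = x, z = y | z = (x + y)%N] -> (2 <= z)%N ->
    forall w, 0%N \in w -> P (rcons w z).
  by move=> hz z2 w w0; apply/hP/zero_then_big_rcons; [|right].
have liftQ z : [\/ z = x, z = y | z = (x + y)%N] -> forall w, True -> Q (rcons w z).
  by move=> hz w _; apply: hQ.
have hx : [\/ x = x, x = y | x = (x + y)%N] by constructor.
have hy : [\/ y = x, y = y | y = (x + y)%N] by constructor.
have hxy : [\/ (x + y)%N = x, (x + y)%N = y | (x + y)%N = (x + y)%N] by constructor.
rewrite harS_rcons; apply: hspanD; first apply: hspanD.
- case/zero_then_big_rcons: bad_px => [bad_p|[p0 x2]].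
    exact: hspan_mul_letter (IHp bad_p _) (liftP x hx) (liftQ x hx).
  exact: hspan_mul_letter (harS_zero_mem _ p0) (lift0 x hx x2) (liftQ x hx).
- exact: hspan_mul_letter IHq (liftP y hy) (liftQ y hy).
- apply: hspan_mul_circ => [w|/andP[xn0 _]]; first exact: hQ.
  case/zero_then_big_rcons: bad_px => [bad_p|[p0 x2]].
    exact: hspan_mul_letter (IHp bad_p _) (liftP _ hxy) (liftQ _ hxy).
  have xy2 : (2 <= x + y)%N by rewrite (leq_trans x2) ?leq_addr.
  exact: hspan_mul_letter (harS_zero_mem _ p0) (lift0 _ hxy xy2) (liftQ _ hxy).
Qed.

Lemma harS_zero_then_big p q :
  zero_then_big p -> hspan zero_then_big (fun _ => True) (harS p q).
Proof.
elim/last_ind: p q => [|p x IHp] q bad_px; first by case: zero_then_big_nil.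
elim/last_ind: q => [|q y IHq].
  by rewrite harS_nilr; apply: hspan_supported; apply: supported_word.
by apply: hspan_harS_rcons => // bad_p q'; apply: IHp.
Qed.

Lemma harS_n0_H0 p q : n0word p -> H0word q -> hspan n0word H0word (harS p q).
Proof.
case/lastP: p => [[]//|p x] [/[!last_rcons] x_gt0 bad_px].
case/lastP: q => [|q y /H0word_rcons y_gt0].
  rewrite harS_nilr => _; apply: hspan_supported; apply: supported_word.
  by rewrite /n0word last_rcons.
have last_gt0 z : [\/ z = x, z = y | z = (x + y)%N] -> (0 < z)%N.
  by case=> ->; rewrite ?addn_gt0 ?x_gt0.
apply: hspan_harS_rcons => //.
- by move=> w z /last_gt0 z_gt0 bad; split; rewrite ?last_rcons.
- by move=> w z /last_gt0 /H0word_rcons.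
- by move=> bad_p q'; apply: harS_zero_then_big.
- exact: harS_zero_then_big.
Qed.

Lemma harS_H0 p q : H0word p -> H0word q -> supported H0word (harS p q).
Proof.
case/lastP: p => [_|p x /H0word_rcons x_gt0]; first by rewrite harS_nill; apply: supported_word.
case/lastP: q => [_|q y /H0word_rcons y_gt0].
  by rewrite harS_nilr; apply: supported_word; apply/H0word_rcons.
have [_ SD SZ] := supported_closed H0word.
have ends_gt0 z (X : CA) : (0 < z)%N -> supported H0word (X * wordA [:: z]).
  by move=> z_gt0; apply: (supported_mul_letter supported_any) => w _; apply/H0word_rcons.
have xy_gt0 : (0 < x + y)%N by rewrite addn_gt0 x_gt0.
rewrite harS_rcons; apply: (SD); first apply: (SD); try exact: ends_gt0.
rewrite /circA; case: ifP => _; last exact: ends_gt0.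
by rewrite malg_scalerAr; apply: (SZ); apply: ends_gt0.
Qed.

Lemma harmE X Y : harm X Y = lin_ext (fun u => lin_ext (harW u) Y) X.
Proof.
rewrite /harm /lin_ext; apply: eq_bigr => u _; rewrite scaler_sumr.
by apply: eq_bigr => v _; rewrite scalerA.
Qed.

Theorem harm_ideal X Y :
  in_n (iotaA X) -> in_H0 (iotaA Y) -> in_n (iotaA (harm X Y)).
Proof.
move=> /in_n_iotaA [X1 [X2 [hX1 hX2 ->]]] /in_H0_iotaA hY; apply/in_n_iotaA.
rewrite harmE linearD linearZ /=; apply: hspanD.
  apply: lin_ext_closed (hspan_closed _ _) _ => u uX1.
  apply: lin_ext_closed (hspan_closed _ _) _ => v vY.
  exact: harS_n0_H0 (hX1 _ uX1) (hY _ vY).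
apply: hspan_hbar; apply: lin_ext_closed (supported_closed _) _ => u uX2.
apply: lin_ext_closed (supported_closed _) _ => v vY.
exact: harS_H0 (hX2 _ uX2) (hY _ vY).
Qed.

(** * The shuffle product *)

Section Automaton.
Local Open Scope nat_scope.

(* Statistics of a word of H read from the left; on the spelling of an A-word
   they are described by run_abword, and tail_a counts the trailing letters a
   up to 2. *)
Record state := State {
  zeros : nat; endb : bool; zero_seen : bool; bad : bool;
  tail_a : nat; nonempty : bool; headb : bool }.

Definition step (x : state) (c : bool) : state :=
  if c then State (zeros x - endb x) false (zero_seen x)
              (bad x || zero_seen x && (0 < tail_a x)) (minn (tail_a x).+1 2) true
              (nonempty x && headb x)
  else State (zeros x).+1 true (zero_seen x || endb x) (bad x) 0 true (nonempty x ==> headb x).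

Definition init := State 0 false false false 0 false false.
Definition run (s : seq bool) := foldl step init s.

Lemma run_rcons s c : run (rcons s c) = step (run s) c.
Proof. exact: foldl_rcons. Qed.

Definition coherent x := [/\ endb x -> tail_a x = 0, tail_a x <= 2,
  zero_seen x -> 2 <= tail_a x -> bad x & endb x <= zeros x].

Lemma coherent_run s : coherent (run s).
Proof.
elim/last_ind: s => [//|s c]; rewrite run_rcons.
case: (run s) => z e b p t n h [/= h1 h2 h3 h4]; case: c; split => //=.
- by rewrite geq_minr.
- by move=> zs ta2; rewrite zs; apply/orP; right; lia.
Qed.

(* X, Y are reached on two words and Z on a word occurring with coefficient
   hbar^m in their shuffle.  A letter hbar b of the output comes from one of
   the inputs or from a merge aa -> a, whence inv_zeros; when this count is
   exact, the pattern zero_then_big of the first word survives (inv_bad), and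
   inv_zero_seen keeps track of a letter hbar b still waiting for its g_k. *)
Record shuffle_inv (X Y Z : state) (m : nat) : Prop := ShuffleInv {
  inv_zeros : zeros Z <= zeros X + zeros Y + m;
  inv_endb : endb Z = endb X || endb Y;
  inv_bad : zeros Z = zeros X + zeros Y + m -> bad X -> bad Z;
  inv_zero_seen : zeros Z = zeros X + zeros Y + m -> zero_seen X ->
    bad Z || zero_seen Z && ((tail_a X <= tail_a Z) || endb Y);
  inv_nonempty : nonempty X || nonempty Y -> nonempty Z;
  inv_headb : ~~ nonempty X || headb X -> ~~ nonempty Y || headb Y ->
    ~~ nonempty Z || headb Z }.

Lemma shuffle_inv_nill Y : shuffle_inv init Y Y 0.
Proof. by split=> //=; rewrite add0n addn0. Qed.

Lemma shuffle_inv_nilr X : shuffle_inv X init X 0.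
Proof. by split=> //=; rewrite ?addn0 ?orbF // => _ ->; rewrite leqnn orbT. Qed.

Lemma shuffle_inv_bl X Y Z m :
  shuffle_inv X Y Z m -> shuffle_inv (step X false) Y (step Z false) m.
Proof.
case: X Z => [zx ex sx bx tx nx hx] [zz ez sz bz tz nz hz].
move=> [/= le eE bI sI nI hI]; split=> //=; rewrite ?addSn //.
- by move=> /eqP; rewrite eqSS => /eqP; apply: bI.
- move=> /eqP; rewrite eqSS => /eqP tight /orP[/(sI tight)|ex_].
    by case/orP=> [->|/andP[-> _]]; rewrite ?orbT.
  by rewrite eE ex_ !orbT.
- by rewrite !implybE.
Qed.

Lemma shuffle_inv_br X Y Z m :
  shuffle_inv X Y Z m -> shuffle_inv X (step Y false) (step Z false) m.
Proof.
case: Y Z => [zy ey sy by_ ty ny hy] [zz ez sz bz tz nz hz].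
move=> [/= le eE bI sI nI hI]; split=> //=; rewrite ?addnS ?addSn ?orbT //.
- by move=> /eqP; rewrite eqSS => /eqP; apply: bI.
- move=> /eqP; rewrite eqSS => /eqP tight /(sI tight).
  by case/orP=> [->|/andP[-> _]]; rewrite ?orbT.
- by rewrite !implybE.
Qed.

Lemma shuffle_inv_al X Y Z m : coherent X -> coherent Z -> ~~ endb Y ->
  shuffle_inv X Y Z m -> shuffle_inv (step X true) Y (step Z true) m.
Proof.
case: X Z => [zx ex sx bx tx nx hx] [zz ez sz bz tz nz hz].
move=> [/= _ _ _ ex_zx] [/= _ _ _ ez_zz] /negbTE eY [/= le eE bI sI nI hI].
rewrite eY orbF in eE; rewrite eY orbF in sI; subst ez.
have tight' : zz - ex = zx - ex + zeros Y + m -> zz = zx + zeros Y + m.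
  by clear -le ex_zx ez_zz; lia.
split=> //=; rewrite ?eY //; first by clear -le ex_zx ez_zz; lia.
- move/tight' => tight /orP[/(bI tight) -> //|/andP[sx_ tx0]].
  by case/orP: (sI tight sx_) => [-> //|/andP[-> txz]]; rewrite (leq_trans tx0 txz) orbT.
- move/tight' => tight /(sI tight) /orP[-> //|/andP[-> txz]].
  have -> : minn tx.+1 2 <= minn tz.+1 2 by clear -txz; lia.
  by rewrite !orbT.
- move=> /andP[nx_ hx_] hY; have nz_ : nz by apply: nI; rewrite nx_.
  by move: hI; rewrite nx_ hx_ nz_ /= => /(_ isT hY).
Qed.

Lemma shuffle_inv_ar X Y Z m : coherent X -> coherent Y -> coherent Z -> ~~ endb X ->
  shuffle_inv X Y Z m -> shuffle_inv X (step Y true) (step Z true) m.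
Proof.
case: Y Z => [zy ey sy by_ ty ny hy] [zz ez sz bz tz nz hz].
move=> [_ tx2 sX _] [/= _ _ _ ey_zy] [/= tz0 _ _ ey_zz] /negbTE eX [/= le eE bI sI nI hI].
rewrite eX /= in eE; subst ez.
have tight' : zz - ey = zeros X + (zy - ey) + m -> zz = zeros X + zy + m.
  by clear -le ey_zy ey_zz; lia.
split=> //=; rewrite ?eX //; first by clear -le ey_zy ey_zz; lia.
- by move/tight' => tight /(bI tight) ->.
- move/tight' => tight sx_; case/orP: (sI tight sx_) => [-> //|/andP[-> /orP[txz|ey_]]].
    by rewrite leq_min tx2 (leq_trans txz) ?orbT.
  have {}tz0 := tz0 ey_; case: (leqP 2 (tail_a X)) => [tx2'|tx1].
    by rewrite bI ?sX.
  by rewrite tz0 /= orbF; apply/orP; right; rewrite -ltnS.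
- move=> hX /andP[ny_ hy_]; have nz_ : nz by apply: nI; rewrite ny_ orbT.
  by move: hI; rewrite ny_ hy_ nz_ /= => /(_ hX isT).
Qed.

Lemma shuffle_inv_aa X Y Z m : coherent X -> coherent Y -> coherent Z ->
  shuffle_inv X Y Z m -> shuffle_inv (step X true) (step Y true) (step Z true) m.+1.
Proof.
case: X Y Z => [zx ex sx bx tx nx hx] [zy ey sy by_ ty ny hy] [zz ez sz bz tz nz hz].
move=> [/= tx0 _ _ ex_zx] [/= _ _ _ ey_zy] [/= _ _ _ ez_zz] [/= le eE bI sI nI hI].
subst ez.
have tight' : zz - (ex || ey) = zx - ex + (zy - ey) + m.+1 ->
    [/\ zz = zx + zy + m, ex & ey].
  by clear -le ex_zx ey_zy ez_zz => e; split; lia.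
split=> //=; first by clear -le ex_zx ey_zy ez_zz; lia.
- move/tight' => [tight ex_ _] /orP[/(bI tight) -> //|/andP[_]].
  by rewrite tx0.
- move/tight' => [tight ex_ _] /(sI tight) /orP[-> //|/andP[-> _]].
  by rewrite tx0 // leq_min /= orbT.
- move=> /andP[nx_ hx_] /andP[ny_ hy_]; have nz_ : nz by apply: nI; rewrite nx_.
  by move: hI; rewrite nx_ hx_ ny_ hy_ nz_ /= => /(_ isT isT).
Qed.
End Automaton.

Section LinearSpan.
Variables (R : ringType) (V : lmodType R).

Inductive lspan (G : V -> Prop) : V -> Prop :=
| lspan0 : lspan G 0
| lspanD x y : lspan G x -> lspan G y -> lspan G (x + y)
| lspanZ c g : G g -> lspan G (c *: g).

Lemma lspan_ind_closed (G P : V -> Prop) x :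
  lmod_closed P -> (forall g, G g -> P g) -> lspan G x -> P x.
Proof.
move=> [P0 PD PZ] GP; elim=> [|y z _ Py _ Pz|c g Gg]; [exact: P0|exact: PD|exact/PZ/GP].
Qed.

Lemma lspan_map (G G' : V -> Prop) (f : V -> V) x :
  f 0 = 0 -> {morph f : y z / y + z} -> (forall c y, f (c *: y) = c *: f y) ->
  (forall g, G g -> G' (f g)) -> lspan G x -> lspan G' (f x).
Proof.
move=> f0 fD fZ GG'; elim=> [|y z _ IHy _ IHz|c g Gg]; rewrite ?f0 ?fD ?fZ.
- exact: lspan0.
- exact: lspanD.
- exact/lspanZ/GG'.
Qed.

End LinearSpan.

Lemma lspan_mulr (R : ringType) (A : lalgType R) (G G' : A -> Prop) (l : A) x :
  (forall g, G g -> G' (g * l)) -> lspan G x -> lspan G' (x * l).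
Proof. by apply: lspan_map => [|y z|c y]; rewrite ?mul0r ?mulrDl ?scalerAl. Qed.

Lemma lspan_scale (R : comRingType) (V : lmodType R) (G G' : V -> Prop) (c : R) x :
  (forall g, G g -> G' (c *: g)) -> lspan G x -> lspan G' (c *: x).
Proof. by apply: lspan_map => [|y z|d y]; rewrite ?scaler0 ?scalerDr ?scalerA 1?mulrC. Qed.

Definition shS (s t : seq bool) : H := shr (rev s) (rev t).

Lemma shS_nill t : shS [::] t = wordH t.
Proof. by rewrite /shS; case: (rev t) (revK t) => [|d v] <-. Qed.

Lemma shS_nilr s : shS s [::] = wordH s.
Proof. by rewrite /shS; case: (rev s) (revK s) => [|[] u] <-. Qed.

Lemma shS_rcons_b s t d : shS (rcons s false) (rcons t d) = shS s (rcons t d) * bH.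
Proof. by rewrite /shS !rev_rcons. Qed.

Lemma shS_rcons_ab s t : shS (rcons s true) (rcons t false) = shS (rcons s true) t * bH.
Proof. by rewrite /shS !rev_rcons. Qed.

Lemma shS_rcons_aa s t : shS (rcons s true) (rcons t true) =
  (shS s (rcons t true) + shS (rcons s true) t + hbar *: shS s t) * aH.
Proof. by rewrite /shS !rev_rcons. Qed.

Definition shuffle_term (s t : seq bool) (g : H) : Prop :=
  exists r m, g = << hbar ^+ m *g FMonom r >> /\ shuffle_inv (run s) (run t) (run r) m.

Lemma shuffle_term_word s t r :
  shuffle_inv (run s) (run t) (run r) 0 -> lspan (shuffle_term s t) (wordH r).
Proof.
by move=> hI; rewrite /wordH -[<< _ >>]scale1r; apply: lspanZ; exists r, 0%N; rewrite expr0.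
Qed.

Lemma wordH_rcons (c : Cr) r d : << c *g FMonom r >> * wordH [:: d] = << c *g FMonom (rcons r d) >>.
Proof. by rewrite /wordH fmalgUM mulr1 cats1. Qed.

Lemma shS_lspan s t : lspan (shuffle_term s t) (shS s t).
Proof.
elim/last_ind: s t => [|s c IHs] t.
  by rewrite shS_nill; apply/shuffle_term_word/shuffle_inv_nill.
elim/last_ind: t => [|t d IHt].
  by rewrite shS_nilr; apply/shuffle_term_word/shuffle_inv_nilr.
have coh := coherent_run.
case: c IHt => IHt; last first.
  rewrite shS_rcons_b; apply: lspan_mulr (IHs _) => _ [r [m [-> hI]]].
  exists (rcons r false), m; split; first exact: wordH_rcons.
  by rewrite [run (rcons s _)]run_rcons [run (rcons r _)]run_rcons; apply: shuffle_inv_bl.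
case: d IHt => IHt; last first.
  rewrite shS_rcons_ab; apply: lspan_mulr IHt => _ [r [m [-> hI]]].
  exists (rcons r false), m; split; first exact: wordH_rcons.
  by rewrite [run (rcons t _)]run_rcons [run (rcons r _)]run_rcons; apply: shuffle_inv_br.
rewrite shS_rcons_aa !mulrDl; apply: lspanD; first apply: lspanD.
- apply: lspan_mulr (IHs _) => _ [r [m [-> hI]]].
  exists (rcons r true), m; split; first exact: wordH_rcons.
  rewrite [run (rcons s _)]run_rcons [run (rcons r _)]run_rcons.
  by apply: shuffle_inv_al => //; rewrite run_rcons.
- apply: lspan_mulr IHt => _ [r [m [-> hI]]].
  exists (rcons r true), m; split; first exact: wordH_rcons.
  rewrite [run (rcons t _)]run_rcons [run (rcons r _)]run_rcons.
  by apply: shuffle_inv_ar => //; rewrite run_rcons.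
- pose G g := exists r m, g = << hbar ^+ m.+1 *g FMonom r >> /\
    shuffle_inv (run s) (run t) (run r) m.
  apply: (lspan_mulr (G := G)); last first.
    by apply: lspan_scale (IHs t) => _ [r [m [-> hI]]]; exists r, m; rewrite malgZU exprS.
  move=> _ [r [m [-> hI]]]; exists (rcons r true), m.+1; split; first exact: wordH_rcons.
  by rewrite !run_rcons; apply: shuffle_inv_aa.
Qed.

Lemma run_cat s t : run (s ++ t) = foldl step (run s) t.
Proof. exact: foldl_cat. Qed.

Lemma foldl_step_a x k : endb x -> tail_a x = 0%N -> nonempty x ->
  foldl step x (nseq k true) = if k is 0 then x else
    State (zeros x).-1 false (zero_seen x) (bad x || zero_seen x && (1 < k)%N)
      (minn k 2) true (headb x).
Proof.
case: x => z e b p t n h /= -> -> ->.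
elim: k => [//|k IH]; rewrite -addn1 nseqD foldl_cat IH /=.
case: k {IH} => [|k] /=; first by rewrite subn1 andbF orbF.
rewrite subn0 leq_min /= -orbA; congr (State _ _ _ (_ || _) _ _ _); last by lia.
by case: b; rewrite /= ?orbT ?addn1.
Qed.

Lemma run_abword w :
  [/\ zeros (run (abword w)) = count_mem 0%N w,
      nonempty (run (abword w)) = (w != [::]),
      headb (run (abword w)) = (w != [::]),
      ~~ endb (run (abword w)) <-> H0word w
    & [/\ zero_seen (run (abword w)) || endb (run (abword w)) = (0%N \in w)
        & bad (run (abword w)) <-> zero_then_big w]].
Proof.
elim/last_ind: w => [|w k [IHz IHn IHh _ [IH0 IHb]]].
  split=> //; first by split=> // _; left.
  by split=> //; split=> // /zero_then_big_nil.
rewrite abword_rcons run_cat /= foldl_step_a //.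
have /negbTE -> : rcons w k != [::] by rewrite -size_eq0 size_rcons.
rewrite mem_rcons in_cons -cats1 count_cat /= cats1 IHz.
have -> : nonempty (run (abword w)) ==> headb (run (abword w)) by rewrite IHn IHh implybb.
case: k => [|k] /=.
- rewrite addn1; split=> //; first by split=> // /H0word_rcons.
  split; first by rewrite IH0 orbT.
  rewrite zero_then_big_rcons -IHb; split; [by left|by case=> // [[]]].
- rewrite !addn0; split=> //; first by split=> // _; apply/H0word_rcons.
  split; first by rewrite orbF IH0.
  rewrite zero_then_big_rcons -IH0 ltnS; split.
    by case/orP => [/IHb|/andP[]]; [left|right].
  by case=> [/IHb ->|[-> k1]] //; rewrite k1 orbT.
Qed.

Lemma nonempty_run s : nonempty (run s) = (s != [::]).
Proof. by elim/last_ind: s => [//|s c _]; rewrite run_rcons -size_eq0 size_rcons; case: c. Qed.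

Lemma headb_run s : headb (run s) = ~~ head true s.
Proof.
elim/last_ind: s => [//|s c IH]; rewrite run_rcons.
by case: c => /=; rewrite nonempty_run IH; case: (s).
Qed.

Lemma abword_surj s : ~~ nonempty (run s) || headb (run s) -> exists w, abword w = s.
Proof.
rewrite nonempty_run headb_run; elim/last_ind: s => [|s c IH] h; first by exists [::].
case: c h => h.
- case: s IH h => [//|x s] IH h.
  case: IH => // w0 hw0.
  case/lastP: w0 hw0 => [//|w k] hw.
  exists (rcons w k.+1).
  by rewrite abword_rcons -addn1 nseqD cats1 -hw abword_rcons rcons_cat rcons_cons.
- have [w hw] : exists w, abword w = s.
    by apply: IH; case: s h => //= x s; rewrite orbC => ->.
  by exists (rcons w 0%N); rewrite abword_rcons hw cats1.
Qed.

Lemma shuffle_term_iotaA w1 w2 g : H0word w1 -> H0word w2 ->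
  shuffle_term (abword w1) (abword w2) g ->
  exists w e, [/\ H0word w,
    hbar ^+ (count_mem 0%N w1 + count_mem 0%N w2) *: g = hbar ^+ e *: iotaA (wordA w)
    & e = 0%N -> n0word w1 -> n0word w].
Proof.
move=> hw1 hw2 [s [m [-> hI]]].
have [z1 n1 h1 a1 [_ b1]] := run_abword w1.
have [z2 n2 h2 a2 _] := run_abword w2.
have [w sE] : exists w, abword w = s.
  by apply/abword_surj/(inv_headb hI); rewrite ?n1 ?h1 ?n2 ?h2 orNb.
rewrite -sE in hI *.
have [z n h a [_ b]] := run_abword w.
have H0w : H0word w.
  by apply/a; rewrite (inv_endb hI) negb_or; apply/andP; split; [apply/a1|apply/a2].
have le := inv_zeros hI; rewrite z1 z2 z in le.
exists w, (count_mem 0%N w1 + count_mem 0%N w2 + m - count_mem 0%N w)%N; split=> //.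
  by rewrite iotaA_word iotaW_abword !malgZU -!exprD subnK.
move=> /eqP; rewrite subn_eq0 => ge [_ /b1 bad1].
have tight : zeros (run (abword w)) = (zeros (run (abword w1)) + zeros (run (abword w2)) + m)%N.
  by rewrite z z1 z2; apply/eqP; rewrite eqn_leq le ge.
have /b bad_w := inv_bad hI tight bad1.
by split=> //; case: H0w => // w0; move: bad_w; rewrite w0 => /zero_then_big_nil.
Qed.

Lemma shS_abword_H0 w1 w2 : H0word w1 -> H0word w2 ->
  Aspan H0word (hbar ^+ (count_mem 0%N w1 + count_mem 0%N w2) *: shS (abword w1) (abword w2)).
Proof.
move=> hw1 hw2; apply: lspan_ind_closed (closed_scale _ (Aspan_closed _)) _ (shS_lspan _ _).
move=> g /(shuffle_term_iotaA hw1 hw2) [w [e [H0w -> _]]].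
by apply: (closedZ (Aspan_closed _)); exists (wordA w); split=> //; apply: supported_word.
Qed.

Lemma shS_abword_n w1 w2 : n0word w1 -> H0word w2 ->
  in_n (hbar ^+ (count_mem 0%N w1 + count_mem 0%N w2) *: shS (abword w1) (abword w2)).
Proof.
move=> n0w1 hw2; have hw1 : H0word w1 by right; case: n0w1.
apply: lspan_ind_closed (closed_scale _ in_n_closed) _ (shS_lspan _ _).
move=> g /(shuffle_term_iotaA hw1 hw2) [w [[|e] [H0w -> n0w]]].
  rewrite scale1r; apply: in_n_n0; exists (wordA w).
  by split=> //; apply: supported_word; apply: n0w.
rewrite exprS -scalerA; apply: in_n_hbar; apply: (closedZ (Aspan_closed _)).
by exists (wordA w); split=> //; apply: supported_word.
Qed.

Lemma shuffleE x y : shuffle x y = lin_ext (fun u => lin_ext (shW u) y) x.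
Proof.
rewrite /shuffle /lin_ext; apply: eq_bigr => u _; rewrite scaler_sumr.
by apply: eq_bigr => v _; rewrite scalerA.
Qed.

Lemma lin_ext_iotaA (F : word -> H) X :
  lin_ext F (iotaA X) =
  lin_ext (fun w : Aword => hbar ^+ count_mem 0%N w *: F (FMonom (abword w))) X.
Proof.
rewrite iotaAE lin_ext_comp; apply: eq_lin_ext => w /=.
by rewrite -[in LHS](fmK w) iotaW_abword lin_extU.
Qed.

Theorem shuffle_ideal x y : in_n x -> in_H0 y -> in_n (shuffle x y).
Proof.
move=> [_ [_ [[X1 [hX1 ->]] [[X2 [hX2 ->]] ->]]]] [Y [hY ->]].
rewrite shuffleE linearD linearZ /=; apply: (closedD in_n_closed).
  rewrite lin_ext_iotaA; apply: lin_ext_closed in_n_closed _ => w1 w1X1.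
  rewrite lin_ext_iotaA scale_lin_ext; apply: lin_ext_closed in_n_closed _ => w2 w2Y.
  by rewrite scalerA -exprD; apply: shS_abword_n (hX1 _ w1X1) (hY _ w2Y).
apply: in_n_hbar; rewrite lin_ext_iotaA.
apply: lin_ext_closed (Aspan_closed _) _ => w1 w1X2.
rewrite lin_ext_iotaA scale_lin_ext; apply: lin_ext_closed (Aspan_closed _) _ => w2 w2Y.
by rewrite scalerA -exprD; apply: shS_abword_H0 (hX2 _ w1X2) (hY _ w2Y).
Qed.

Theorem proposition3p7 :
  (forall X Y : CA, in_n (iotaA X) -> in_H0 (iotaA Y) -> in_n (iotaA (harm X Y)))
  /\ (forall x y : H, in_n x -> in_H0 y -> in_n (shuffle x y)).
Proof. by split; [exact: harm_ideal|exact: shuffle_ideal]. Qed.
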